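(* For all $y,z\in\mathbb{Z}_p$, $S^{y+z}=S^y\circ S^z$ as maps $C(\mathbb{Z}_p,\mathbb{C}_p)\to C(\mathbb{Z}_p,\mathbb{C}_p)$.
   Context: Fix a prime $p$. $\mathbb{C}_p$ denotes the completion of an algebraic closure of $\mathbb{Q}_p$, with absolute value $|\cdot|$ normalized by $|p|=1/p$. $C(\mathbb{Z}_p,\mathbb{C}_p)$ is the $\mathbb{C}_p$-Banach space of continuous functions $\mathbb{Z}_p\to\mathbb{C}_p$ with the sup-norm $\|\cdot\|$. For $n\in\mathbb{Z}_{\ge0}$ and $x\in\mathbb{Z}_p$, $\binom{x}{n}=x(x-1)\cdots(x-n+1)/n!$. For $y\in\mathbb{Z}_p$ and $\phi\in C(\mathbb{Z}_p,\mathbb{C}_p)$ define $S^y(\phi)\in C(\mathbb{Z}_p,\mathbb{C}_p)$ by $S^y(\phi)(x)=\sum_{k\ge0}(-1)^k k!\binom yk\binom xk\phi(x-k)$ (the series converges uniformly in $(x,y)$). *)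

From HB Require Import structures.
From mathcomp Require Import all_boot all_order all_algebra.
From mathcomp Require Import reals.
From Stdlib Require Import ClassicalEpsilon.
Set Implicit Arguments. Unset Strict Implicit. Unset Printing Implicit Defensive.
Import Order.TTheory GRing.Theory Num.Theory.
Local Open Scope ring_scope.

Section Cp.
Variables (R : realType) (K : closedFieldType) (abs : K -> R).

Definition kcvg (u : nat -> K) (l : K) : Prop :=
  forall e : R, 0 < e -> exists N : nat, forall n : nat, (N <= n)%N -> abs (u n - l) < e.

Definition kcauchy (u : nat -> K) : Prop :=
  forall e : R, 0 < e -> exists N : nat, forall m n : nat,
    (N <= m)%N -> (N <= n)%N -> abs (u m - u n) < e.

Definition algebraicQ (x : K) : Prop :=
  exists q : {poly int}, q != 0 /\ root (map_poly intr q) x.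

(* (K, abs) is (isometrically isomorphic to) C_p: an algebraically closed
   field (closedFieldType) with a non-archimedean absolute value normalized by
   |p| = 1/p, complete, in which the algebraic numbers are dense.  These
   properties characterize C_p up to isometric isomorphism. *)
Definition is_Cp (p : nat) : Prop :=
  [/\ forall x : K, 0 <= abs x,
      forall x : K, abs x = 0 <-> x = 0,
      forall x y : K, abs (x * y) = abs x * abs y,
      forall x y : K, abs (x + y) <= Num.max (abs x) (abs y)
    & abs (p%:R) = (p%:R)^-1] /\
  (forall u : nat -> K, kcauchy u -> exists l : K, kcvg u l) /\
  (forall (x : K) (e : R), 0 < e -> exists a : K, algebraicQ a /\ abs (x - a) < e).

(* Z_p inside C_p: the closure of the natural numbers *)
Definition Zp_mem (x : K) : Prop :=
  forall e : R, 0 < e -> exists n : nat, abs (x - n%:R) < e.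

(* phi : Z_p -> C_p continuous (phi is given as a function on K; only its
   values on Z_p matter) *)
Definition cont_Zp (phi : K -> K) : Prop :=
  forall x : K, Zp_mem x -> forall e : R, 0 < e -> exists2 d : R, 0 < d &
    forall x' : K, Zp_mem x' -> abs (x - x') < d -> abs (phi x - phi x') < e.

(* sum of a convergent series (an arbitrary value if it diverges) *)
Definition ksum (u : nat -> K) : K :=
  epsilon (inhabits 0) (fun l => kcvg (fun n => \sum_(k < n) u k) l).

Definition kbinom (x : K) (k : nat) : K :=
  (\prod_(i < k) (x - i%:R)) / (k`!)%:R.

Definition Sop (y : K) (phi : K -> K) : K -> K :=
  fun x => ksum (fun k => (-1) ^+ k * (k`!)%:R * kbinom y k * kbinom x k
                          * phi (x - k%:R)).

End Cp.

(* Expanding S^y (S^z phi) (x) gives the double series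
     sum_k sum_j c^y_k(x) c^z_j(x - k) phi(x - k - j),
   where c^y_k(x) = (-1)^k k! binom(y,k) binom(x,k).  For y, x in Z_p the
   binomial coefficients have norm at most 1, phi is bounded on the compact
   set Z_p, and p^(n/p) divides n!, so the (k, j) term has norm at most
   |k!| |j!| sup|phi|, which tends to 0 as max(k, j) grows.  In a complete
   ultrametric field such a double series may be summed along the
   antidiagonals k + j = n, and by
     binom(x,i) binom(x-i,n-i) i! (n-i)! = n! binom(x,n)
   and Vandermonde's identity the n-th antidiagonal is c^(y+z)_n(x) phi(x - n). *)
From HB Require Import structures.
From mathcomp Require Import all_boot all_order all_algebra.
From mathcomp Require Import reals.
From mathcomp Require Import lra ring zify.
From Stdlib Require Import ClassicalEpsilon FunctionalExtensionality Classical.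
Set Implicit Arguments. Unset Strict Implicit. Unset Printing Implicit Defensive.
Import Order.TTheory GRing.Theory Num.Theory.
Local Open Scope ring_scope.

Section Binomial.
Variable K : closedFieldType.
Hypothesis K_char0 : [pchar K] =i pred0.

Definition kffact (w : K) k := \prod_(i < k) (w - i%:R).

Definition Scoef (y x : K) k := (-1) ^+ k * (k`!)%:R * kbinom y k * kbinom x k.

Lemma SopE (R : realType) (abs : K -> R) y phi x :
  Sop abs y phi x = ksum abs (fun k => Scoef y x k * phi (x - k%:R)).
Proof. by []. Qed.

Lemma kbinomE (w : K) k : kbinom w k = kffact w k / (k`!)%:R.
Proof. by []. Qed.

Lemma kffact_nat n k : kffact n%:R k = (n ^_ k)%:R.
Proof.
elim: k => [|k IH]; first by rewrite /kffact big_ord0 ffactn0.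
rewrite /kffact big_ord_recr /= -/(kffact _ _) IH ffactnSr natrM.
have [kn|nk] := leqP k n; first by rewrite natrB.
by rewrite ffact_small // !mul0r.
Qed.

Lemma kffactD (x : K) k j : kffact x k * kffact (x - k%:R) j = kffact x (k + j).
Proof.
rewrite /kffact big_split_ord /=; congr (_ * _); apply: eq_bigr => i _ /=.
by rewrite natrD opprD addrA.
Qed.

Lemma natr_neq0 n : (0 < n)%N -> n%:R != 0 :> K.
Proof. by move=> n0; move/pcharf0P: K_char0 => ->; rewrite -lt0n. Qed.

Lemma fact_neq0 n : (n`!)%:R != 0 :> K.
Proof. exact: natr_neq0 (fact_gt0 n). Qed.

Lemma kbinom0 (w : K) : kbinom w 0 = 1.
Proof. by rewrite kbinomE /kffact big_ord0 fact0 divr1. Qed.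

Lemma kbinomS (w : K) k : kbinom w k.+1 * k.+1%:R = kbinom w k * (w - k%:R).
Proof.
rewrite !kbinomE /kffact big_ord_recr /= factS natrM.
move: (fact_neq0 k) (natr_neq0 (ltn0Sn k)).
move: (k`!)%:R (k.+1)%:R (\prod_(i < k) (w - i%:R)) => a b c ha hb.
by field; rewrite ha hb.
Qed.

Lemma kbinom_shift (x : K) i n : (i <= n)%N ->
  (i`!)%:R * ((n - i)`!)%:R * (kbinom x i * kbinom (x - i%:R) (n - i))
  = (n`!)%:R * kbinom x n.
Proof.
move=> hi; rewrite !kbinomE.
have := kffactD x i (n - i); rewrite subnKC // => <-.
move: (fact_neq0 i) (fact_neq0 (n - i)) (fact_neq0 n).
move: (i`!)%:R ((n - i)`!)%:R (n`!)%:R (kffact x i) (kffact (x - i%:R) (n - i)).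
by move=> a b c u v ha hb hc; field; rewrite ha hb hc.
Qed.

Lemma kbinom_vandermonde (y z : K) n :
  \sum_(k < n.+1) kbinom y k * kbinom z (n - k) = kbinom (y + z) n.
Proof.
elim: n => [|n IH]; first by rewrite big_ord1 !kbinom0 mulr1.
apply: (mulIf (natr_neq0 (ltn0Sn n))); rewrite kbinomS -IH !mulr_suml.
have splitS (k : 'I_n.+1) : kbinom y k * kbinom z (n - k) * (y + z - n%:R) =
    kbinom y k.+1 * k.+1%:R * kbinom z (n - k)
    + kbinom y k * (kbinom z (n - k).+1 * (n - k).+1%:R).
  have hk : (k <= n)%N by rewrite -ltnS.
  rewrite -mulrA kbinomS -mulrA kbinomS natrB //.
  by move: (kbinom y k) (kbinom z (n - k)) => a b; ring.
rewrite (eq_bigr _ (fun k _ => splitS k)) big_split /=.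
have -> : \sum_(k < n.+2) kbinom y k * kbinom z (n.+1 - k) * n.+1%:R =
    \sum_(k < n.+2) kbinom y k * kbinom z (n.+1 - k) * k%:R
    + \sum_(k < n.+2) kbinom y k * kbinom z (n.+1 - k) * (n.+1 - k)%:R.
  rewrite -big_split /=; apply: eq_bigr => k _.
  have hk : (k <= n.+1)%N by rewrite -ltnS.
  by rewrite -mulrDr -natrD subnKC.
congr (_ + _).
  rewrite big_ord_recl /= mulr0 add0r; apply: eq_bigr => k _.
  by rewrite /bump /= add1n subSS; ring.
rewrite big_ord_recr /= subnn mulr0 addr0; apply: eq_bigr => k _.
have hk : (k <= n)%N by rewrite -ltnS.
by rewrite subSn //; ring.
Qed.

Lemma Scoef_antidiag (y z x : K) n :
  \sum_(i < n.+1) Scoef y x i * Scoef z (x - i%:R) (n - i) = Scoef (y + z) x n.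
Proof.
rewrite /Scoef -(kbinom_vandermonde y z) mulr_sumr mulr_suml; apply: eq_bigr => i _.
have hi : (i <= n)%N by rewrite -ltnS.
have signD : (-1) ^+ n = (-1) ^+ i * (-1) ^+ (n - i) :> K by rewrite -exprD subnKC.
transitivity ((-1) ^+ n * ((n`!)%:R * kbinom x n) * (kbinom y i * kbinom z (n - i)));
  last by ring.
by rewrite -(kbinom_shift x hi) signD; ring.
Qed.

End Binomial.

Section NonArchimedean.
Variables (R : realType) (K : closedFieldType) (abs : K -> R).
Hypothesis abs_ge0 : forall x : K, 0 <= abs x.
Hypothesis abs_eq0 : forall x : K, abs x = 0 <-> x = 0.
Hypothesis absM : forall x y : K, abs (x * y) = abs x * abs y.
Hypothesis abs_ultra : forall x y : K, abs (x + y) <= Num.max (abs x) (abs y).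

Lemma abs0 : abs 0 = 0.
Proof. exact/abs_eq0. Qed.

Lemma abs_gt0 x : (0 < abs x) = (x != 0).
Proof. by rewrite lt_def abs_ge0 andbT; congr negb; apply/eqP/eqP => /abs_eq0. Qed.

Lemma abs1 : abs 1 = 1.
Proof.
have n0 : abs 1 != 0 by rewrite gt_eqF // abs_gt0 oner_eq0.
by apply: (mulIf n0); rewrite mul1r -absM mulr1.
Qed.

Lemma absX x n : abs (x ^+ n) = abs x ^+ n.
Proof. by elim: n => [|n IH]; rewrite ?abs1 // !exprS absM IH. Qed.

Lemma absV x : abs x^-1 = (abs x)^-1.
Proof.
have [->|x0] := eqVneq x 0; first by rewrite invr0 abs0 invr0.
have ax0 : abs x != 0 by rewrite gt_eqF // abs_gt0.
by apply: (mulfI ax0); rewrite -absM !mulfV // abs1.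
Qed.

Lemma abs_signN1 k : abs ((-1) ^+ k) = 1.
Proof.
have h : abs (-1) * abs (-1) = 1 by rewrite -absM mulrNN mulr1 abs1.
have absN1 : abs (-1) = 1 by have := abs_ge0 (-1); nra.
by rewrite absX absN1 expr1n.
Qed.

Lemma absN x : abs (- x) = abs x.
Proof. by rewrite -mulN1r absM (abs_signN1 1) mul1r. Qed.

Lemma abs_distC x y : abs (x - y) = abs (y - x).
Proof. by rewrite -absN opprB. Qed.

Lemma abs_add_le x y e : abs x <= e -> abs y <= e -> abs (x + y) <= e.
Proof. by move=> hx hy; apply: le_trans (abs_ultra x y) _; rewrite ge_max hx hy. Qed.

Lemma abs_add_lt x y e : abs x < e -> abs y < e -> abs (x + y) < e.
Proof. by move=> hx hy; apply: le_lt_trans (abs_ultra x y) _; rewrite gt_max hx hy. Qed.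

Lemma abs_sub_le x y e : abs x <= e -> abs y <= e -> abs (x - y) <= e.
Proof. by move=> hx hy; apply: abs_add_le; rewrite ?absN. Qed.

Lemma abs_sub_lt x y e : abs x < e -> abs y < e -> abs (x - y) < e.
Proof. by move=> hx hy; apply: abs_add_lt; rewrite ?absN. Qed.

Lemma abs_sum_le (I : Type) (r : seq I) (P : pred I) (F : I -> K) e :
  0 <= e -> (forall i, P i -> abs (F i) <= e) -> abs (\sum_(i <- r | P i) F i) <= e.
Proof.
move=> e0 hF; apply: (big_ind (fun x => abs x <= e)) => //; first by rewrite abs0.
by move=> x y; apply: abs_add_le.
Qed.

Lemma abs_sum_lt (I : Type) (r : seq I) (P : pred I) (F : I -> K) e :
  0 < e -> (forall i, P i -> abs (F i) < e) -> abs (\sum_(i <- r | P i) F i) < e.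
Proof.
move=> e0 hF; apply: (big_ind (fun x => abs x < e)) => //; first by rewrite abs0.
by move=> x y; apply: abs_add_lt.
Qed.

Lemma abs_sum_nat_le (F : nat -> K) m n e : 0 <= e ->
  (forall i, (m <= i < n)%N -> abs (F i) <= e) -> abs (\sum_(m <= i < n) F i) <= e.
Proof. by move=> e0 hF; rewrite big_nat_cond; apply: abs_sum_le => // i /andP[/hF]. Qed.

Lemma abs_sum_nat_lt (F : nat -> K) m n e : 0 < e ->
  (forall i, (m <= i < n)%N -> abs (F i) < e) -> abs (\sum_(m <= i < n) F i) < e.
Proof. by move=> e0 hF; rewrite big_nat_cond; apply: abs_sum_lt => // i /andP[/hF]. Qed.

Lemma abs_prod_le1 (I : Type) (r : seq I) (P : pred I) (F : I -> K) :
  (forall i, P i -> abs (F i) <= 1) -> abs (\prod_(i <- r | P i) F i) <= 1.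
Proof.
move=> hF; apply: (big_ind (fun x => abs x <= 1)) => //; first by rewrite abs1.
by move=> a b ha hb; rewrite absM mulr_ile1.
Qed.

Lemma abs_natr_le1 n : abs n%:R <= 1.
Proof.
elim: n => [|n IH]; first by rewrite abs0.
by rewrite -addn1 natrD abs_add_le // abs1.
Qed.

Lemma abs_prod_sub_le (a b : nat -> K) d k : 0 <= d ->
  (forall i, abs (a i) <= 1) -> (forall i, abs (b i) <= 1) ->
  (forall i, abs (a i - b i) <= d) ->
  abs (\prod_(i < k) a i - \prod_(i < k) b i) <= d.
Proof.
move=> d0 ha hb hab; elim: k => [|k IH]; first by rewrite !big_ord0 subrr abs0.
rewrite !big_ord_recr /=.
have -> : (\prod_(i < k) a i) * a k - (\prod_(i < k) b i) * b k =
    (\prod_(i < k) a i - \prod_(i < k) b i) * a k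
    + (\prod_(i < k) b i) * (a k - b k) by ring.
apply: abs_add_le; rewrite absM.
  by apply: le_trans (ler_wpM2l (abs_ge0 _) (ha k)) _; rewrite mulr1.
have hb1 : abs (\prod_(i < k) b i) <= 1 by apply: abs_prod_le1.
by apply: le_trans (ler_wpM2r (abs_ge0 _) hb1) _; rewrite mul1r.
Qed.

Lemma kcvg_uniq (u : nat -> K) l1 l2 : kcvg abs u l1 -> kcvg abs u l2 -> l1 = l2.
Proof.
move=> h1 h2; apply/eqP/negPn/negP; rewrite -subr_eq0 -abs_gt0 => e0.
have [N1 H1] := h1 _ e0; have [N2 H2] := h2 _ e0; set n := maxn N1 N2.
suff : abs (l1 - l2) < abs (l1 - l2) by rewrite ltxx.
rewrite {1}(_ : l1 - l2 = (u n - l2) - (u n - l1)); last by ring.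
by apply: abs_sub_lt; [apply: H2 | apply: H1]; rewrite ?leq_maxl ?leq_maxr.
Qed.

Lemma kcvg_ksum (u : nat -> K) l : kcvg abs (fun n => \sum_(k < n) u k) l -> ksum abs u = l.
Proof.
move=> h; apply: (kcvg_uniq _ h); rewrite /ksum.
exact: (epsilon_spec _ (fun l => kcvg abs _ l) (ex_intro _ l h)).
Qed.

Lemma kcvg_abs_le (v : nat -> K) l e N :
  kcvg abs v l -> (forall n, (N <= n)%N -> abs (v n) <= e) -> abs l <= e.
Proof.
move=> hv hb; rewrite leNgt; apply/negP => hl.
have e0 : 0 < abs l by apply: le_lt_trans hl; apply: le_trans (hb N (leqnn N)).
have [M HM] := hv _ e0; set n := maxn N M.
suff : abs l < abs l by rewrite ltxx.
rewrite {1}(_ : l = v n - (v n - l)); last by ring.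
by apply: abs_sub_lt; [apply: le_lt_trans hl; apply: hb | apply: HM];
  rewrite ?leq_maxl ?leq_maxr.
Qed.

Lemma kcvgMl (v : nat -> K) l c : kcvg abs v l -> kcvg abs (fun n => c * v n) (c * l).
Proof.
move=> h e e0; have [->|c0] := eqVneq c 0.
  by exists 0%N => n _; rewrite !mul0r subr0 abs0.
have ac : 0 < abs c by rewrite abs_gt0.
have [N HN] := h (e / abs c) (divr_gt0 e0 ac); exists N => n hn.
by rewrite -mulrBr absM mulrC -ltr_pdivlMr //; apply: HN.
Qed.

Lemma ksumMl (u : nat -> K) c l : kcvg abs (fun n => \sum_(k < n) u k) l ->
  ksum abs (fun k => c * u k) = c * ksum abs u.
Proof.
move=> h; rewrite (kcvg_ksum h); apply: kcvg_ksum.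
have := kcvgMl c h; congr kcvg; apply: functional_extensionality => n.
by rewrite mulr_sumr.
Qed.

Lemma sumr_ord_sub (u : nat -> K) m n : (m <= n)%N ->
  \sum_(k < n) u k - \sum_(k < m) u k = \sum_(m <= k < n) u k.
Proof.
by move=> mn; rewrite -!(big_mkord xpredT) (big_cat_nat (leq0n m) mn) /=; ring.
Qed.

Lemma ksum_tail_le (u : nat -> K) l n e : 0 <= e ->
  kcvg abs (fun m => \sum_(k < m) u k) l ->
  (forall j, (n <= j)%N -> abs (u j) <= e) -> abs (l - \sum_(k < n) u k) <= e.
Proof.
move=> e0 hl hu.
apply: (@kcvg_abs_le (fun m => \sum_(k < m) u k - \sum_(k < n) u k) _ _ n).
  move=> d d0; have [N HN] := hl d d0; exists N => m hm.
  by rewrite (_ : _ - _ - _ = \sum_(k < m) u k - l); [apply: HN | ring].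
move=> m nm; rewrite sumr_ord_sub //; apply: abs_sum_nat_le => // i /andP[ni _].
exact: hu.
Qed.

Lemma sum_antidiag (a : nat -> nat -> K) n :
  \sum_(t < n) \sum_(i < t.+1) a i (t - i)%N = \sum_(k < n) \sum_(j < n - k) a k j.
Proof.
elim: n => [|n IH]; first by rewrite !big_ord0.
rewrite big_ord_recr /= IH [RHS]big_ord_recr /= subSnn big_ord1.
rewrite (big_ord_recr n) /= subnn.
under [in RHS]eq_bigr => k _ do rewrite subSn ?(ltnW (ltn_ord k)) // big_ord_recr /=.
by rewrite big_split /= addrA.
Qed.

Definition vanishing2 (a : nat -> nat -> K) : Prop :=
  forall e, 0 < e -> exists N, forall k j, ((N <= k) || (N <= j))%N -> abs (a k j) < e.

Lemma vanishing2_row a k : vanishing2 a -> kcvg abs (a k) 0.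
Proof.
move=> van e e0; have [N HN] := van e e0; exists N => j hj.
by rewrite subr0 HN // hj orbT.
Qed.

Lemma vanishing2_antidiag a :
  vanishing2 a -> kcvg abs (fun t => \sum_(i < t.+1) a i (t - i)%N) 0.
Proof.
move=> van e e0; have [N HN] := van e e0; exists (N + N)%N => t ht.
rewrite subr0; apply: abs_sum_lt => // i _; apply: HN.
by have := ltn_ord i; case: (leqP N i) => //= hi hit; lia.
Qed.

Section Complete.
Hypothesis K_complete : forall u : nat -> K, kcauchy abs u -> exists l : K, kcvg abs u l.

Lemma kcvg0_ksum (u : nat -> K) : kcvg abs u 0 -> kcvg abs (fun n => \sum_(k < n) u k) (ksum abs u).
Proof.
move=> hu; suff [l hl] : exists l, kcvg abs (fun n => \sum_(k < n) u k) l.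
  by rewrite (kcvg_ksum hl).
apply: K_complete => e e0; have [N HN] := hu e e0; exists N => m n hm hn.
wlog mn : m n hm hn / (n <= m)%N.
  move=> W; have [nm|mn] := leqP n m; first exact: W.
  by rewrite abs_distC; apply: W => //; apply: ltnW.
rewrite sumr_ord_sub //; apply: abs_sum_nat_lt => // i /andP[ni _].
by rewrite -(subr0 (u i)); apply: HN; apply: leq_trans ni.
Qed.

Lemma ksum_antidiag a : vanishing2 a ->
  ksum abs (fun k => ksum abs (a k))
  = ksum abs (fun n => \sum_(i < n.+1) a i (n - i)%N).
Proof.
move=> van; have hL := kcvg0_ksum (vanishing2_antidiag van).
set L := ksum _ _ in hL *; apply: kcvg_ksum => e e0.
have e20 : 0 < e / 2 by rewrite divr_gt0.
have e2e : e / 2 < e by rewrite ltr_pdivrMr // ltr_pMr // ltr1n.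
have [N HN] := van _ e20; have [N2 HN2] := hL _ e0.
exists (maxn (N + N) N2) => n; rewrite geq_max => /andP[hNN hN2].
rewrite (_ : _ - L = (\sum_(k < n) ksum abs (a k)
    - \sum_(t < n) \sum_(i < t.+1) a i (t - i)%N)
    + (\sum_(t < n) \sum_(i < t.+1) a i (t - i)%N - L)); last by ring.
apply: abs_add_lt; last exact: HN2.
rewrite sum_antidiag -sumrB; apply: le_lt_trans e2e.
apply: abs_sum_le => [|k _]; first exact: ltW.
apply: ksum_tail_le; first exact: ltW.
  exact: kcvg0_ksum (vanishing2_row k van).
move=> j hj; apply/ltW/HN; have := ltn_ord k.
by case: (leqP N k) => //= hk hkn; lia.
Qed.

Section PAdic.
Variable p : nat.
Hypothesis p_prime : prime p.
Hypothesis abs_p : abs p%:R = (p%:R)^-1.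

Let q : R := (p%:R)^-1.

Lemma q_gt0 : 0 < q.
Proof. by rewrite invr_gt0 ltr0n prime_gt0. Qed.

Lemma q_le1 : q <= 1.
Proof. by rewrite invf_le1 ?ltr0n ?prime_gt0 // ler1n prime_gt0. Qed.

Lemma abs_pX m : abs (p ^ m)%:R = q ^+ m.
Proof. by rewrite natrX absX abs_p. Qed.

Lemma qX_le m n : (m <= n)%N -> q ^+ n <= q ^+ m.
Proof. exact: ler_wiXn2l (ltW q_gt0) q_le1 _ _. Qed.

Lemma qX_small e : 0 < e -> exists s, q ^+ s < e.
Proof.
move=> e0; set s := Num.bound e^-1; exists s.
have h1 : e^-1 < s%:R by apply: archi_boundP; rewrite invr_ge0 ltW.
have h2 : (s%:R : R) <= (p ^ s)%:R by rewrite ler_nat ltnW // ltn_expl // prime_gt1.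
have h3 : e^-1 < p%:R ^+ s by rewrite -natrX; apply: lt_le_trans h2.
by rewrite /q exprVn -(invrK e) ltf_pV2 ?posrE ?exprn_gt0 ?ltr0n ?prime_gt0 ?invr_gt0.
Qed.

Lemma Cp_char0 : [pchar K] =i pred0.
Proof.
move=> r; rewrite [RHS]inE; apply/negbTE/negP => hr.
have r0 := pcharf0 hr; have r_prime := pcharf_prime hr.
have [rp|rp] := eqVneq r p.
  by move: abs_p; rewrite -rp r0 abs0 => /esym/eqP; rewrite invr_eq0 pnatr_eq0 rp
    gtn_eqF ?prime_gt0.
have cop : coprime p r by rewrite prime_coprime // dvdn_prime2 // eq_sym.
have [a _] := Bezoutl r (prime_gt0 p_prime); rewrite (eqP cop) => /dvdnP[c hc].
(* [c] is an inverse of [p] modulo [r], so [|c| = p > 1] *)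
have h1 : abs c%:R * (p%:R)^-1 = 1.
  by rewrite -abs_p -absM -natrM -hc natrD natrM r0 mulr0 addr0 abs1.
have pn0 : (p%:R : R) != 0 by rewrite pnatr_eq0 gtn_eqF ?prime_gt0.
have hc1 : abs c%:R = p%:R by apply: (mulIf (invr_neq0 pn0)); rewrite h1 mulfV.
by have := abs_natr_le1 c; rewrite hc1 leNgt ltr1n prime_gt1.
Qed.

Lemma abs_fact_gt0 n : 0 < abs (n`!)%:R.
Proof. by rewrite abs_gt0 (fact_neq0 Cp_char0). Qed.

Lemma pfactor_dvdn_fact n : (p ^ (n %/ p) %| n`!)%N.
Proof.
rewrite pfactor_dvdn ?fact_gt0 // logn_fact //.
by case: n => [|n]; rewrite ?div0n // big_ltn // expn1 leq_addr.
Qed.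

Lemma abs_fact_le n : abs (n`!)%:R <= q ^+ (n %/ p).
Proof.
rewrite -(divnK (pfactor_dvdn_fact n)) natrM absM abs_pX.
by apply: ler_piMl; [exact: exprn_ge0 (ltW q_gt0) | exact: abs_natr_le1].
Qed.

Lemma kcvg_fact0 : kcvg abs (fun n => (n`!)%:R) 0.
Proof.
move=> e e0; have [s hs] := qX_small e0; exists (s * p)%N => n hn.
rewrite subr0; apply: le_lt_trans (abs_fact_le n) (le_lt_trans _ hs).
by apply: qX_le; rewrite leq_divRL // prime_gt0.
Qed.

Local Notation Zp := (Zp_mem abs).

Lemma Zp_abs_le1 w : Zp w -> abs w <= 1.
Proof.
move=> h; have [n hn] := h 1 ltr01.
rewrite (_ : w = (w - n%:R) + n%:R); last by ring.
by apply: abs_add_le; [exact: ltW | exact: abs_natr_le1].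
Qed.

Lemma Zp_subn w k : Zp w -> Zp (w - k%:R).
Proof.
move=> h e e0; have [n hn] := h e e0; have [s hs] := qX_small e0.
(* approximate [w - k] by [n - k], shifted by a highly divisible multiple of [k] *)
exists (p ^ s * k + n - k)%N.
have hk : (k <= p ^ s * k + n)%N.
  by apply: leq_trans (leq_addr _ _); apply: leq_pmull; rewrite expn_gt0 prime_gt0.
rewrite natrB // natrD natrM.
rewrite (_ : _ - _ = (w - n%:R) - (p ^ s)%:R * k%:R); last by ring.
apply: abs_sub_lt => //; rewrite absM abs_pX; apply: le_lt_trans hs.
by apply: ler_piMr; [exact: exprn_ge0 (ltW q_gt0) | exact: abs_natr_le1].
Qed.

Lemma Zp_kcvg (v : nat -> K) l : (forall m, Zp (v m)) -> kcvg abs v l -> Zp l.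
Proof.
move=> hv hl e e0; have [N HN] := hl e e0; have [n hn] := hv N e e0.
exists n; rewrite (_ : l - n%:R = (v N - n%:R) - (v N - l)); last by ring.
by apply: abs_sub_lt => //; apply: HN.
Qed.

Definition ball_nat (b m : nat) (w : K) := abs (w - b%:R) <= q ^+ m.

Lemma Zp_ball_nat w m : Zp w -> exists2 b, (b < p ^ m)%N & ball_nat b m w.
Proof.
move=> h; have [n hn] := h _ (exprn_gt0 m q_gt0); exists (n %% p ^ m)%N.
  by rewrite ltn_pmod // expn_gt0 prime_gt0.
have E : (n%:R : K) = (n %/ p ^ m)%:R * (p ^ m)%:R + (n %% p ^ m)%:R.
  by rewrite -natrM -natrD -divn_eq.
rewrite /ball_nat (_ : w - _ = (w - n%:R) + (n %/ p ^ m)%:R * (p ^ m)%:R).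
  apply: abs_add_le; first exact: ltW.
  rewrite absM abs_pX.
  by apply: ler_piMl; [exact: exprn_ge0 (ltW q_gt0) | exact: abs_natr_le1].
by rewrite E; ring.
Qed.

Lemma abs_kffact_le w k : Zp w -> abs (kffact w k) <= abs (k`!)%:R.
Proof.
move=> hw; have [n hn] := hw _ (abs_fact_gt0 k).
rewrite (_ : kffact w k = (kffact w k - kffact n%:R k) + kffact n%:R k); last by ring.
apply: abs_add_le.
  apply: (@abs_prod_sub_le (fun i => w - i%:R) (fun i => n%:R - i%:R)).
    exact: ltW (abs_fact_gt0 k).
  - by move=> i; apply: abs_sub_le; [exact: Zp_abs_le1 | exact: abs_natr_le1].
  - by move=> i; apply: abs_sub_le; exact: abs_natr_le1.
  - by move=> i; rewrite (_ : _ - _ = w - n%:R); [exact: ltW | ring].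
rewrite kffact_nat -bin_ffact natrM absM.
by apply: ler_piMl; [exact: abs_ge0 | exact: abs_natr_le1].
Qed.

Lemma abs_kbinom_le1 w k : Zp w -> abs (kbinom w k) <= 1.
Proof.
move=> hw; rewrite kbinomE absM absV ler_pdivrMr ?abs_fact_gt0 // mul1r.
exact: abs_kffact_le.
Qed.

Lemma abs_Scoef_le y x k : Zp y -> Zp x -> abs (Scoef y x k) <= abs (k`!)%:R.
Proof.
move=> hy hx; rewrite /Scoef absM absM absM abs_signN1 mul1r -mulrA.
by rewrite ler_piMr ?mulr_ile1 ?abs_kbinom_le1 ?abs_ge0.
Qed.

Section Bounded.
Variable phi : K -> K.

Definition bounded_on (S : K -> Prop) := exists M, forall w, S w -> abs (phi w) <= M.

Lemma bounded_on_ord n (T : nat -> K -> Prop) :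
  (forall b, (b < n)%N -> bounded_on (T b)) ->
  bounded_on (fun w => exists2 b, (b < n)%N & T b w).
Proof.
elim: n => [|n IH] hT; first by exists 0 => w [].
have [M1 H1] := IH (fun b hb => hT b (ltnW hb)); have [M2 H2] := hT n (ltnSn n).
exists (Num.max M1 M2) => w [b]; rewrite ltnS leq_eqVlt => /orP[/eqP -> Tnw|hb Tbw].
  by rewrite le_max H2 ?orbT.
by rewrite le_max H1 //; exists b.
Qed.

Lemma unbounded_on_ball S m : (forall w, S w -> Zp w) -> ~ bounded_on S ->
  exists b, ~ bounded_on (fun w => S w /\ ball_nat b m w).
Proof.
move=> hS hS_ub; apply: NNPP => hball; apply: hS_ub.
have [M HM] : bounded_on (fun w => exists2 b, (b < p ^ m)%N & S w /\ ball_nat b m w).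
  by apply: bounded_on_ord => b _; apply: NNPP => hb; apply: hball; exists b.
exists M => w hw; have [b hb hwb] := Zp_ball_nat m (hS w hw).
by apply: HM; exists b.
Qed.

Definition ball_choice (S : K -> Prop) m :=
  epsilon (inhabits 0%N) (fun b => ~ bounded_on (fun w => S w /\ ball_nat b m w)).

(* Compactness of Z_p: if phi is unbounded on Z_p, it is unbounded on a
   nested sequence of balls of radii q^m. *)
Fixpoint unbounded_chain (m : nat) : K -> Prop :=
  if m is m'.+1 then
    fun w => unbounded_chain m' w /\ ball_nat (ball_choice (unbounded_chain m') m) m w
  else Zp.

Definition chain_center m := ball_choice (unbounded_chain m) m.+1.

Lemma unbounded_chainP : ~ bounded_on Zp ->
  forall m, ~ bounded_on (unbounded_chain m) /\ (forall w, unbounded_chain m w -> Zp w).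
Proof.
move=> hZ; elim=> [|m [IH1 IH2]] //=; split; last by move=> w [/IH2].
exact: (epsilon_spec _ _ (unbounded_on_ball m.+1 IH2 IH1)).
Qed.

Lemma unbounded_chain_le m m' w : (m <= m')%N -> unbounded_chain m' w -> unbounded_chain m w.
Proof.
elim: m' => [|m' IH]; first by rewrite leqn0 => /eqP ->.
by rewrite leq_eqVlt => /orP[/eqP -> //|]; rewrite ltnS => hm [/(IH hm)].
Qed.

Lemma unbounded_chain_center s m w : (s < m)%N -> unbounded_chain m w ->
  ball_nat (chain_center s) s.+1 w.
Proof. by move=> hsm /(unbounded_chain_le hsm) []. Qed.

Lemma unbounded_chain_limit : ~ bounded_on Zp ->
  exists2 l, Zp l & forall s, ball_nat (chain_center s) s.+1 l.
Proof.
move=> hZ; have chainP := unbounded_chainP hZ.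
have ne m : exists w, unbounded_chain m w.
  apply: NNPP => hne; apply: (chainP m).1; exists 0 => w hw.
  by case: hne; exists w.
pose ws m := epsilon (inhabits 0) (unbounded_chain m).
have hws m : unbounded_chain m (ws m) := epsilon_spec _ _ (ne m).
have [l hl] : exists l, kcvg abs ws l.
  apply: K_complete => e e0; have [s hs] := qX_small e0; exists s.+1 => m m' hm hm'.
  rewrite (_ : ws m - ws m' = (ws m - (chain_center s)%:R) - (ws m' - (chain_center s)%:R));
    last by ring.
  apply: le_lt_trans hs; apply: le_trans (qX_le (leqnSn s)).
  by apply: abs_sub_le; apply: unbounded_chain_center (hws _).
exists l; first by apply: (Zp_kcvg _ hl) => m; apply: (chainP m).2.
move=> s; apply: (@kcvg_abs_le (fun m => ws m - (chain_center s)%:R) _ _ s.+1).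
  move=> e e0; have [N HN] := hl e e0; exists N => n hn.
  by rewrite (_ : _ - _ - _ = ws n - l); [exact: HN | ring].
by move=> n hn; apply: unbounded_chain_center (hws _).
Qed.

Lemma cont_Zp_bounded : cont_Zp abs phi ->
  exists2 M, 0 < M & forall w, Zp w -> abs (phi w) <= M.
Proof.
move=> hc; suff [M HM] : bounded_on Zp.
  by exists (Num.max M 1) => [|w /HM hw]; rewrite ?lt_max ?ltr01 ?orbT // le_max hw.
apply: NNPP => hZ; have [l hl hlb] := unbounded_chain_limit hZ.
have [d d0 hd] := hc l hl 1 ltr01; have [s hs] := qX_small d0.
apply: (unbounded_chainP hZ s.+1).1; exists (Num.max (abs (phi l)) 1) => w hw.
have hlw : abs (l - w) < d.
  apply: le_lt_trans hs; apply: le_trans (qX_le (leqnSn s)).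
  rewrite (_ : l - w = (l - (chain_center s)%:R) - (w - (chain_center s)%:R)); last by ring.
  exact: abs_sub_le (hlb s) (unbounded_chain_center (ltnSn s) hw).
have hw1 := hd w ((unbounded_chainP hZ s.+1).2 w hw) hlw.
rewrite (_ : phi w = phi l - (phi l - phi w)); last by ring.
apply: abs_sub_le; first by rewrite le_max lexx.
by rewrite le_max (ltW hw1) orbT.
Qed.

End Bounded.

Lemma vanishing2_factM (a : nat -> nat -> K) M : 0 < M ->
  (forall k j, abs (a k j) <= abs (k`!)%:R * (abs (j`!)%:R * M)) -> vanishing2 a.
Proof.
move=> M0 ha e e0; have [N HN] := kcvg_fact0 (divr_gt0 e0 M0); exists N => k j hkj.
have hfact n : (N <= n)%N -> abs (n`!)%:R * M < e.
  by move=> hn; rewrite -ltr_pdivlMr // -(subr0 (n`!)%:R); apply: HN.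
apply: le_lt_trans (ha k j) _; case/orP: hkj => [/hfact|/hfact] hlt.
  apply: le_lt_trans hlt; rewrite ler_pM2l ?abs_fact_gt0 //.
  by rewrite ler_piMl ?abs_natr_le1 // ltW.
by apply: le_lt_trans hlt; rewrite ler_piMl ?abs_natr_le1 // mulr_ge0 // ltW.
Qed.

Lemma abs_Sterm_le (z w : K) phi M j : Zp z -> Zp w ->
  (forall v, Zp v -> abs (phi v) <= M) ->
  abs (Scoef z w j * phi (w - j%:R)) <= abs (j`!)%:R * M.
Proof.
move=> hz hw hM; rewrite absM.
by apply: ler_pM; rewrite ?abs_ge0 ?abs_Scoef_le ?hM //; exact: Zp_subn.
Qed.

Lemma Sop_kcvg z phi w M : Zp z -> Zp w -> 0 < M ->
  (forall v, Zp v -> abs (phi v) <= M) ->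
  kcvg abs (fun n => \sum_(j < n) Scoef z w j * phi (w - j%:R)) (Sop abs z phi w).
Proof.
move=> hz hw M0 hM; rewrite SopE; apply: kcvg0_ksum => e e0.
have [N HN] := kcvg_fact0 (divr_gt0 e0 M0); exists N => j hj.
rewrite subr0; apply: le_lt_trans (abs_Sterm_le j hz hw hM) _.
by rewrite -ltr_pdivlMr // -(subr0 (j`!)%:R); apply: HN.
Qed.

Lemma Sop_add y z phi x : cont_Zp abs phi -> Zp y -> Zp z -> Zp x ->
  Sop abs (y + z) phi x = Sop abs y (Sop abs z phi) x.
Proof.
move=> hc hy hz hx; have [M M0 hM] := cont_Zp_bounded hc.
pose a k j := Scoef y x k * (Scoef z (x - k%:R) j * phi (x - k%:R - j%:R)).
have hxk k : Zp (x - k%:R) by exact: Zp_subn.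
have -> : Sop abs y (Sop abs z phi) x = ksum abs (fun k => ksum abs (a k)).
  rewrite SopE; congr ksum; apply: functional_extensionality => k.
  by rewrite (ksumMl _ (Sop_kcvg hz (hxk k) M0 hM)).
rewrite ksum_antidiag; last first.
  apply: (vanishing2_factM M0) => k j; rewrite /a absM.
  by apply: ler_pM; rewrite ?abs_ge0 ?abs_Scoef_le ?abs_Sterm_le.
rewrite SopE; congr ksum; apply: functional_extensionality => n.
rewrite -(Scoef_antidiag Cp_char0) mulr_suml; apply: eq_bigr => i _.
have hi : (i <= n)%N by rewrite -ltnS.
by rewrite /a natrB // opprB addrA subrK mulrA.
Qed.

End PAdic.
End Complete.
End NonArchimedean.

Theorem proposition6p3 (p : nat) (R : realType) (K : closedFieldType)
    (abs : K -> R) :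
  prime p -> is_Cp abs p ->
  forall y z : K, Zp_mem abs y -> Zp_mem abs z ->
  forall phi : K -> K, cont_Zp abs phi ->
  forall x : K, Zp_mem abs x ->
    Sop abs (y + z) phi x = Sop abs y (Sop abs z phi) x.
Proof.
move=> p_prime [[abs_ge0 abs_eq0 absM abs_ultra abs_p] [K_complete _]].
move=> y z hy hz phi hc x hx.
exact: (Sop_add abs_ge0 abs_eq0 absM abs_ultra K_complete p_prime abs_p hc hy hz hx).
Qed.
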